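(* Let $u,v$ be distinct points in the plane and $\gamma_1<\gamma_2$ angles such that the polar angle $\varphi(uv)$ of $\overrightarrow{uv}$ lies in $[\gamma_1,\gamma_2)$. Let $R=\overline{D(u,|uv|)\cap C_u(\gamma_1,\gamma_2)}$ (a closed sector with apex $u$ and with $v$ on its arc), and suppose $\alpha=\max\{\varphi(uv)-\gamma_1,\ \gamma_2-\varphi(uv)\}<\pi/3$. Then for every $w\in R\setminus\{u\}$, $$\frac{|uw|}{|uv|-|vw|}\leq\left(1-2\sin\frac{\alpha}{2}\right)^{-1}.$$
   Context: $D(a,\rho)$ is the open disk of center $a$ and radius $\rho$, and $\overline{X}$ denotes the closure of $X$. Polar angles are measured from the positive $x$-axis, modulo $2\pi$; $\varphi(uv)$ is the polar angle of the vector $\overrightarrow{uv}$. $C_u(\gamma_1,\gamma_2)$ is the set of points $w\neq u$ for which the polar angle of $\overrightarrow{uw}$ lies in $[\gamma_1,\gamma_2)$. *)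

From Stdlib Require Import Reals.
Open Scope R_scope.

Definition pt : Type := (R * R)%type.

Definition pdist (p q : pt) : R :=
  sqrt ((fst p - fst q) ^ 2 + (snd p - snd q) ^ 2).

(* theta is a representative (mod 2*pi) of the polar angle of the vector uw *)
Definition has_polar_angle (u w : pt) (theta : R) : Prop :=
  w <> u /\
  cos theta * pdist u w = fst w - fst u /\
  sin theta * pdist u w = snd w - snd u.

Definition pdisk (a : pt) (rho : R) (x : pt) : Prop := pdist a x < rho.

Definition cone (u : pt) (g1 g2 : R) (w : pt) : Prop :=
  w <> u /\ exists theta, g1 <= theta < g2 /\ has_polar_angle u w theta.

Definition pclosure (S : pt -> Prop) (x : pt) : Prop :=
  forall eps, 0 < eps -> exists y, S y /\ pdist x y < eps.

From Stdlib Require Import Reals Psatz.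
Open Scope R_scope.

(* Every point x of the open sector satisfies |ux| < |uv| and
   <x - u, v - u> >= cos(alpha) |ux| |uv|; both inequalities are Lipschitz
   conditions, so they survive (non-strictly) in the closure.  With r = |uw|,
   d = |uv| and s = sin(alpha/2), so that cos(alpha) = 1 - 2 s^2, the law of
   cosines gives
     |vw|^2 <= d^2 + r^2 - 2 (1 - 2 s^2) r d = (d - r + 2 r s)^2 - 4 r s (d - r) (1 - s),
   hence |vw| <= d - r + 2 r s, i.e. r (1 - 2 s) <= d - |vw|, and 1 - 2 s > 0
   because alpha < pi/3. *)

Definition dotp (u p q : pt) : R :=
  (fst p - fst u) * (fst q - fst u) + (snd p - snd u) * (snd q - snd u).

Lemma pdist_ge0 (p q : pt) : 0 <= pdist p q.
Proof. apply sqrt_pos. Qed.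

Lemma pdist_sqr (p q : pt) :
  pdist p q * pdist p q = (fst p - fst q) ^ 2 + (snd p - snd q) ^ 2.
Proof. unfold pdist; apply sqrt_sqrt, Rplus_le_le_0_compat; apply pow2_ge_0. Qed.

Lemma pdist_sym (p q : pt) : pdist p q = pdist q p.
Proof. unfold pdist; f_equal; ring. Qed.

Lemma cauchy_schwarz2 (a b c e : R) :
  Rabs (a * c + b * e) <= sqrt (a ^ 2 + b ^ 2) * sqrt (c ^ 2 + e ^ 2).
Proof.
  assert (Hx : 0 <= sqrt (a ^ 2 + b ^ 2)) by apply sqrt_pos.
  assert (Hy : 0 <= sqrt (c ^ 2 + e ^ 2)) by apply sqrt_pos.
  assert (Ex : sqrt (a ^ 2 + b ^ 2) * sqrt (a ^ 2 + b ^ 2) = a ^ 2 + b ^ 2)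
    by (apply sqrt_sqrt, Rplus_le_le_0_compat; apply pow2_ge_0).
  assert (Ey : sqrt (c ^ 2 + e ^ 2) * sqrt (c ^ 2 + e ^ 2) = c ^ 2 + e ^ 2)
    by (apply sqrt_sqrt, Rplus_le_le_0_compat; apply pow2_ge_0).
  assert (Lagrange : (a * c + b * e) ^ 2 + (a * e - b * c) ^ 2
                     = (a ^ 2 + b ^ 2) * (c ^ 2 + e ^ 2)) by ring.
  pose proof (pow2_ge_0 (a * e - b * c)).
  apply Rsqr_incr_0; [| apply Rabs_pos | apply Rmult_le_pos; assumption].
  rewrite <- Rsqr_abs; unfold Rsqr.
  set (X := sqrt (a ^ 2 + b ^ 2)) in *; set (Y := sqrt (c ^ 2 + e ^ 2)) in *.
  replace (X * Y * (X * Y)) with ((a ^ 2 + b ^ 2) * (c ^ 2 + e ^ 2))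
    by (rewrite <- Ex, <- Ey; ring).
  nra.
Qed.

Lemma dotp_abs_le (u p q : pt) : Rabs (dotp u p q) <= pdist u p * pdist u q.
Proof. rewrite (pdist_sym u p), (pdist_sym u q); apply cauchy_schwarz2. Qed.

Lemma dotp_sub_le (u v x y : pt) :
  dotp u y v - dotp u x v <= pdist x y * pdist u v.
Proof.
  replace (dotp u y v - dotp u x v)
    with ((fst y - fst x) * (fst v - fst u) + (snd y - snd x) * (snd v - snd u))
    by (unfold dotp; ring).
  rewrite (pdist_sym x y), (pdist_sym u v).
  eapply Rle_trans; [apply Rle_abs | apply cauchy_schwarz2].
Qed.

Lemma pdist_law_of_cosines (u p q : pt) :
  pdist p q * pdist p q
  = pdist u p * pdist u p + pdist u q * pdist u q - 2 * dotp u p q.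
Proof. rewrite !pdist_sqr; unfold dotp; ring. Qed.

Lemma pdist_triangle (a b c : pt) : pdist a c <= pdist a b + pdist b c.
Proof.
  pose proof (pdist_law_of_cosines b a c) as Hcos.
  pose proof (Rle_abs (- dotp b a c)) as Hopp; rewrite Rabs_Ropp in Hopp.
  pose proof (dotp_abs_le b a c).
  pose proof (pdist_ge0 a c); pose proof (pdist_ge0 a b); pose proof (pdist_ge0 b c).
  rewrite (pdist_sym b a) in *; nra.
Qed.

Lemma has_polar_angle_dotp (u x v : pt) (th phi : R) :
  has_polar_angle u x th -> has_polar_angle u v phi ->
  dotp u x v = pdist u x * pdist u v * cos (th - phi).
Proof.
  intros [_ [Hcx Hsx]] [_ [Hcv Hsv]].
  unfold dotp; rewrite <- Hcx, <- Hsx, <- Hcv, <- Hsv, cos_minus; ring.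
Qed.

Lemma cos_le_cos_of_abs_le (al t : R) :
  al <= PI -> Rabs t <= al -> cos al <= cos t.
Proof.
  intros Hal Ht; pose proof (Rabs_pos t).
  destruct (Rle_dec 0 t).
  - rewrite Rabs_pos_eq in Ht by lra; apply cos_decr_1; lra.
  - rewrite Rabs_left in Ht by lra; rewrite <- (cos_neg t); apply cos_decr_1; lra.
Qed.

Lemma cone_dotp_ge (u v x : pt) (g1 g2 phi al : R) :
  has_polar_angle u v phi -> al <= PI -> phi - al <= g1 -> g2 <= phi + al ->
  cone u g1 g2 x -> cos al * pdist u x * pdist u v <= dotp u x v.
Proof.
  intros Hv Hal Hg1 Hg2 [_ [th [Hth Hx]]].
  rewrite (has_polar_angle_dotp _ _ _ _ _ Hx Hv).
  assert (cos al <= cos (th - phi))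
    by (apply cos_le_cos_of_abs_le; [lra | apply Rabs_le; lra]).
  assert (0 <= pdist u x * pdist u v) by (apply Rmult_le_pos; apply pdist_ge0).
  nra.
Qed.

Lemma pclosure_le (S : pt -> Prop) (f : pt -> R) (K : R) (w : pt) :
  0 <= K -> (forall x y, f x - f y <= K * pdist x y) ->
  (forall y, S y -> f y <= 0) -> pclosure S w -> f w <= 0.
Proof.
  intros HK Hlip HS Hw; apply Rnot_lt_le; intro Hpos.
  assert (Heps : 0 < f w / (K + 1)) by (apply Rdiv_lt_0_compat; lra).
  destruct (Hw _ Heps) as [y [Sy Hy]].
  pose proof (Hlip w y); pose proof (HS y Sy).
  assert (K * pdist w y <= K * (f w / (K + 1))) by (apply Rmult_le_compat_l; lra).
  replace (K * (f w / (K + 1))) with (f w - f w / (K + 1)) in * by (field; lra).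
  lra.
Qed.

Lemma closed_sector_bounds (u v w : pt) (g1 g2 phi al : R) :
  has_polar_angle u v phi -> al <= PI -> phi - al <= g1 -> g2 <= phi + al ->
  pclosure (fun x => pdisk u (pdist u v) x /\ cone u g1 g2 x) w ->
  pdist u w <= pdist u v /\ cos al * pdist u w * pdist u v <= dotp u w v.
Proof.
  intros Hv Hal Hg1 Hg2 Hw; pose proof (pdist_ge0 u v) as Hd.
  set (S := fun x => pdisk u (pdist u v) x /\ cone u g1 g2 x) in Hw.
  pose proof (COS_bound al) as [Hc1 Hc2].
  split.
  - enough (pdist u w - pdist u v <= 0) by lra.
    apply (pclosure_le S (fun x => pdist u x - pdist u v) 1 w); [lra | | | exact Hw].
    + intros x y; pose proof (pdist_triangle u y x); rewrite (pdist_sym y x) in *; lra.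
    + intros y [Hy _]; unfold pdisk in Hy; lra.
  - enough (cos al * pdist u w * pdist u v - dotp u w v <= 0) by lra.
    apply (pclosure_le S (fun x => cos al * pdist u x * pdist u v - dotp u x v)
                       (2 * pdist u v) w); [lra | | | exact Hw].
    + intros x y; simpl.
      pose proof (pdist_triangle u y x); pose proof (pdist_triangle u x y).
      pose proof (dotp_sub_le u v x y).
      rewrite (pdist_sym y x) in *.
      assert (cos al * (pdist u x - pdist u y) <= pdist x y) by nra.
      assert (cos al * (pdist u x - pdist u y) * pdist u v <= pdist x y * pdist u v)
        by (apply Rmult_le_compat_r; assumption).
      lra.
    + intros y [_ Hy]; pose proof (cone_dotp_ge u v y g1 g2 phi al Hv Hal Hg1 Hg2 Hy).
      lra.
Qed.

Lemma pdist_le_of_dotp_ge (u v w : pt) (s : R) :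
  0 <= s <= 1 -> pdist u w <= pdist u v ->
  (1 - 2 * s ^ 2) * pdist u w * pdist u v <= dotp u w v ->
  pdist v w <= pdist u v - pdist u w + 2 * s * pdist u w.
Proof.
  intros Hs Hrd Hdot.
  pose proof (pdist_law_of_cosines u w v) as Hcos; rewrite (pdist_sym w v) in Hcos.
  set (r := pdist u w) in *; set (d := pdist u v) in *.
  assert (Hr : 0 <= r) by apply pdist_ge0.
  assert (Hgap : 0 <= r * s * (d - r) * (1 - s)).
  { repeat apply Rmult_le_pos; lra. }
  apply Rsqr_incr_0; [| apply pdist_ge0 | nra].
  unfold Rsqr; nra.
Qed.

Lemma Rdiv_le_inv_of_mult_le (r D k : R) :
  0 < k -> 0 <= r -> r * k <= D -> r / D <= / k.
Proof.
  intros Hk Hr HD; pose proof (Rinv_0_lt_compat k Hk).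
  destruct (Req_dec D 0) as [E | E].
  - rewrite E; unfold Rdiv; rewrite Rinv_0; lra.
  - apply (Rmult_le_reg_r (D * k)); [nra |].
    replace (r / D * (D * k)) with (r * k) by (field; lra).
    replace (/ k * (D * k)) with D by (field; lra).
    exact HD.
Qed.

Lemma sin_half_lt_half (al : R) : 0 <= al < PI / 3 -> 0 <= sin (al / 2) < 1 / 2.
Proof.
  intros Hal; pose proof PI_RGT_0; split.
  - apply sin_ge_0; lra.
  - rewrite <- sin_PI6; apply sin_increasing_1; lra.
Qed.

Theorem corollary4 (u v : pt) (g1 g2 phi : R) :
  u <> v -> g1 < g2 ->
  g1 <= phi < g2 -> has_polar_angle u v phi ->
  Rmax (phi - g1) (g2 - phi) < PI / 3 ->
  forall w : pt,
    pclosure (fun x => pdisk u (pdist u v) x /\ cone u g1 g2 x) w ->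
    w <> u ->
    pdist u w / (pdist u v - pdist v w)
      <= / (1 - 2 * sin (Rmax (phi - g1) (g2 - phi) / 2)).
Proof.
  intros _ _ Hphi Hv Hal w Hw _.
  pose proof (Rmax_l (phi - g1) (g2 - phi)); pose proof (Rmax_r (phi - g1) (g2 - phi)).
  set (al := Rmax (phi - g1) (g2 - phi)) in *.
  pose proof PI_RGT_0.
  destruct (closed_sector_bounds u v w g1 g2 phi al Hv ltac:(lra) ltac:(lra) ltac:(lra) Hw)
    as [Hrd Hdot].
  destruct (sin_half_lt_half al) as [Hs0 Hs1]; [lra |].
  assert (Hcos : cos al = 1 - 2 * sin (al / 2) ^ 2).
  { replace al with (2 * (al / 2)) at 1 by field; rewrite cos_2a_sin; ring. }
  rewrite Hcos in Hdot.
  pose proof (pdist_le_of_dotp_ge u v w (sin (al / 2)) ltac:(lra) Hrd Hdot).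
  apply Rdiv_le_inv_of_mult_le; [lra | apply pdist_ge0 | lra].
Qed.
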